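(* In the standing setting, if a robust $\boldsymbol b$-flow exists, then there exists an optimal robust $\boldsymbol b$-flow $\boldsymbol f=(f^1,f^2)$ with $c(\boldsymbol f)=\max\{c(f^1),c(f^2)\}=c(f^2)$.
   Context: A RobMCF instance $(G,u,c,\boldsymbol b)$ consists of a finite directed graph (parallel arcs allowed) $G=(V,A)$ whose arc set is partitioned as $A=A^{\mathrm{fix}}\cup A^{\mathrm{free}}$ into fixed and free arcs, capacities $u:A\to\mathbb Z_{\ge0}$, costs $c:A\to\mathbb Z_{\ge0}$, a finite nonempty set of scenarios $\Lambda$, and balances $b^\lambda:V\to\mathbb Z$ with $\sum_{v}b^\lambda(v)=0$. A $b^\lambda$-flow is a function $f^\lambda:A\to\mathbb Z_{\ge0}$ with $f^\lambda(a)\le u(a)$ for all $a$ and $\sum_{a=(v,w)\in A}f^\lambda(a)-\sum_{a=(w,v)\in A}f^\lambda(a)=b^\lambda(v)$ for all $v\in V$; its cost is $c(f^\lambda)=\sum_a c(a)f^\lambda(a)$. A robust $\boldsymbol b$-flow is a tuple $(f^\lambda)_{\lambda\in\Lambda}$ of $b^\lambda$-flows with $f^\lambda(a)=f^{\lambda'}(a)$ for all $a\in A^{\mathrm{fix}}$, $\lambda,\lambda'\in\Lambda$; its cost is $\max_\lambda c(f^\lambda)$; it is optimal if of minimum cost. Series-parallel (SP) digraphs are defined recursively: a single arc $(o,q)$ is an SP digraph with origin $o$ and target $q$; if $G_1$ (origin $o_1$, target $q_1$) and $G_2$ (origin $o_2$, target $q_2$) are SP digraphs, then their series composition (identify $q_1$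 with $o_2$; origin $o_1$, target $q_2$) and their parallel composition (identify $o_1$ with $o_2$ to form the origin and $q_1$ with $q_2$ to form the target) are SP digraphs. Standing setting: $G$ is an SP digraph with origin $o$ and target $q$, $\Lambda=\{1,2\}$, and there are integers $0\le d^1\le d^2$ with $b^\lambda(o)=d^\lambda$, $b^\lambda(q)=-d^\lambda$ and $b^\lambda(v)=0$ for all other $v$ (unique source $o$, unique sink $q$). *)

From mathcomp Require Import all_boot all_order all_algebra.
Set Implicit Arguments. Unset Strict Implicit. Unset Printing Implicit Defensive.
Import GRing.Theory Num.Theory.

(* A digraph is given by its arc list E : seq (nat * nat); arc i (i < size E)
   goes from tail (nth (0,0) E i).1 to head (nth (0,0) E i).2.  Vertices are
   natural numbers; the vertex set is the set of arc endpoints. *)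

Definition tl (E : seq (nat * nat)) (i : nat) : nat := (nth (0,0) E i).1.
Definition hd (E : seq (nat * nat)) (i : nat) : nat := (nth (0,0) E i).2.

Definition verts (E : seq (nat * nat)) : seq nat :=
  [seq p.1 | p <- E] ++ [seq p.2 | p <- E].

Inductive SP : seq (nat * nat) -> nat -> nat -> Prop :=
| SP_arc o q : o != q -> SP [:: (o, q)] o q
| SP_series E1 E2 o1 q1 q2 :
    SP E1 o1 q1 -> SP E2 q1 q2 ->
    (forall v, v \in verts E1 -> v \in verts E2 -> v = q1) ->
    SP (E1 ++ E2) o1 q2
| SP_parallel E1 E2 o q :
    SP E1 o q -> SP E2 o q ->
    (forall v, v \in verts E1 -> v \in verts E2 -> v = o \/ v = q) ->
    SP (E1 ++ E2) o q.

Definition stbal (o q d : nat) (v : nat) : int :=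
  if v == o then Posz d else if v == q then (- Posz d)%R else 0%R.

(* f : nat -> nat gives the flow value on arc i (only i < size E matters);
   nonnegativity and integrality are built into the type nat. *)
Definition is_bflow (E : seq (nat * nat)) (u : nat -> nat) (b : nat -> int)
    (f : nat -> nat) : Prop :=
  (forall i, i < size E -> f i <= u i) /\
  (forall v : nat,
     (Posz (\sum_(i < size E | tl E i == v) f i)
      - Posz (\sum_(i < size E | hd E i == v) f i))%R = b v).

Definition flow_cost (E : seq (nat * nat)) (c : nat -> nat) (f : nat -> nat) : nat :=
  \sum_(i < size E) c i * f i.

Definition robust_flow (E : seq (nat * nat)) (fixed : nat -> bool)
    (u : nat -> nat) (b1 b2 : nat -> int) (f1 f2 : nat -> nat) : Prop :=
  is_bflow E u b1 f1 /\ is_bflow E u b2 f2 /\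
  (forall i, i < size E -> fixed i -> f1 i = f2 i).

Definition robust_cost (E : seq (nat * nat)) (c : nat -> nat) (f1 f2 : nat -> nat) : nat :=
  maxn (flow_cost E c f1) (flow_cost E c f2).

Definition optimal_robust_flow (E : seq (nat * nat)) (fixed : nat -> bool)
    (u c : nat -> nat) (b1 b2 : nat -> int) (f1 f2 : nat -> nat) : Prop :=
  robust_flow E fixed u b1 b2 f1 f2 /\
  (forall g1 g2, robust_flow E fixed u b1 b2 g1 g2 ->
     robust_cost E c f1 f2 <= robust_cost E c g1 g2).

(* Start from any optimal robust flow (f1, f2); one exists because robust
   costs are natural numbers.  The heart of the argument is an interpolation
   property of series-parallel digraphs: if f1 and f2 are o-q flows of values
   x and y and minn x y <= t <= y, then some o-q flow g of value t satisfies
   minn (f1 a) (f2 a) <= g a <= f2 a on every arc a.  It is proved by induction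
   on the SP structure: a series composition passes t to both parts, and a
   parallel composition splits t between the two parts.  Applied with t = d1,
   g respects the capacities (g <= f2), agrees with f1 = f2 on fixed arcs, and
   costs at most c(f2).  Hence (g, f2) is a robust flow of cost c(f2), which is
   at most the optimum, so (g, f2) is optimal with cost c(f2). *)

From mathcomp Require Import all_boot all_order all_algebra zify.
From Stdlib Require Import Classical.

Set Implicit Arguments.
Unset Strict Implicit.

Section FlowSums.

Implicit Types (E : seq (nat * nat)) (f g : nat -> nat) (v : nat).

Definition outflow E f v := \sum_(0 <= i < size E | tl E i == v) f i.
Definition inflow E f v := \sum_(0 <= i < size E | hd E i == v) f i.

Definition shift (n : nat) f i := f (n + i).

Definition glue (n : nat) (g1 g2 : nat -> nat) i := if i < n then g1 i else g2 (i - n).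

Lemma sum_endpoint_cat E1 E2 (end_ : seq (nat * nat) -> nat -> nat) f v :
  (forall i, end_ (E1 ++ E2) i = if i < size E1 then end_ E1 i else end_ E2 (i - size E1)) ->
  \sum_(0 <= i < size (E1 ++ E2) | end_ (E1 ++ E2) i == v) f i =
  \sum_(0 <= i < size E1 | end_ E1 i == v) f i +
  \sum_(0 <= i < size E2 | end_ E2 i == v) shift (size E1) f i.
Proof.
move=> end_cat; rewrite size_cat (@big_cat_nat _ _ _ (size E1)) ?leq_addr //=.
congr (_ + _).
- rewrite big_mkcond [in RHS]big_mkcond /=; apply: eq_big_nat => i /andP[_ lti].
  by rewrite end_cat lti.
- rewrite -{1}(add0n (size E1)) big_addn addKn big_mkcond [in RHS]big_mkcond /=.
  apply: eq_big_nat => i _.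
  by rewrite end_cat ltnNge leq_addl /= addnK /shift addnC.
Qed.

Lemma outflow_cat E1 E2 f v :
  outflow (E1 ++ E2) f v = outflow E1 f v + outflow E2 (shift (size E1) f) v.
Proof. by apply: sum_endpoint_cat => i; rewrite /tl nth_cat; case: ifP. Qed.

Lemma inflow_cat E1 E2 f v :
  inflow (E1 ++ E2) f v = inflow E1 f v + inflow E2 (shift (size E1) f) v.
Proof. by apply: sum_endpoint_cat => i; rewrite /hd nth_cat; case: ifP. Qed.

Lemma outflow_ext E f g v : (forall i, i < size E -> f i = g i) -> outflow E f v = outflow E g v.
Proof. by move=> efg; rewrite /outflow !big_mkord; apply: eq_bigr => i _; apply: efg. Qed.

Lemma inflow_ext E f g v : (forall i, i < size E -> f i = g i) -> inflow E f v = inflow E g v.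
Proof. by move=> efg; rewrite /inflow !big_mkord; apply: eq_bigr => i _; apply: efg. Qed.

Lemma shift_glue E1 g1 g2 i : shift (size E1) (glue (size E1) g1 g2) i = g2 i.
Proof. by rewrite /glue /shift ltnNge leq_addr /= addKn. Qed.

Lemma outflow_glue E1 E2 g1 g2 v :
  outflow (E1 ++ E2) (glue (size E1) g1 g2) v = outflow E1 g1 v + outflow E2 g2 v.
Proof.
rewrite outflow_cat; congr (_ + _); apply: outflow_ext => i lti.
- by rewrite /glue lti.
- exact: shift_glue.
Qed.

Lemma inflow_glue E1 E2 g1 g2 v :
  inflow (E1 ++ E2) (glue (size E1) g1 g2) v = inflow E1 g1 v + inflow E2 g2 v.
Proof.
rewrite inflow_cat; congr (_ + _); apply: inflow_ext => i lti.
- by rewrite /glue lti.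
- exact: shift_glue.
Qed.

Lemma outflow_arc o q f v : outflow [:: (o, q)] f v = if o == v then f 0 else 0.
Proof. by rewrite /outflow big_mkcond /= big_nat1 /tl. Qed.

Lemma inflow_arc o q f v : inflow [:: (o, q)] f v = if q == v then f 0 else 0.
Proof. by rewrite /inflow big_mkcond /= big_nat1 /hd. Qed.

Lemma mem_verts_cat E1 E2 v : (v \in verts (E1 ++ E2)) = (v \in verts E1) || (v \in verts E2).
Proof.
rewrite /verts !map_cat !mem_cat.
by case: (v \in [seq p.1 | p <- E1]); case: (v \in [seq p.1 | p <- E2]);
   case: (v \in [seq p.2 | p <- E1]); case: (v \in [seq p.2 | p <- E2]).
Qed.

Lemma tl_verts E i : i < size E -> tl E i \in verts E.
Proof. by move=> lti; rewrite /verts mem_cat /tl map_f ?mem_nth. Qed.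

Lemma hd_verts E i : i < size E -> hd E i \in verts E.
Proof. by move=> lti; rewrite /verts mem_cat /hd map_f ?mem_nth ?orbT. Qed.

Lemma outflow_notin E f v : v \notin verts E -> outflow E f v = 0.
Proof.
move=> vE; rewrite /outflow big_mkord big1 // => i /eqP tli.
by move: vE; rewrite -tli tl_verts.
Qed.

Lemma inflow_notin E f v : v \notin verts E -> inflow E f v = 0.
Proof.
move=> vE; rewrite /inflow big_mkord big1 // => i /eqP hdi.
by move: vE; rewrite -hdi hd_verts.
Qed.

End FlowSums.

Section SeriesParallel.

Implicit Types (E : seq (nat * nat)) (f g : nat -> nat) (o q v x t : nat).

Lemma SP_struct E o q : SP E o q ->
  [/\ o != q, o \in verts E, q \in verts E &
      forall i, i < size E -> hd E i != o /\ tl E i != q].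
Proof.
elim=> {E o q}.
- move=> o q oq; split => //; first by rewrite /verts /= !inE eqxx.
  + by rewrite /verts /= !inE eqxx !orbT.
  + by case=> // _; rewrite /hd /tl /= eq_sym.
- move=> E1 E2 o1 q1 q2 _ [oq1 o1E1 _ arcs1] _ [_ _ q2E2 arcs2] meet.
  split.
  + apply/eqP => eo; move: q2E2; rewrite -eo => /(meet o1 o1E1) o1q1.
    by move: oq1; rewrite o1q1 eqxx.
  + by rewrite mem_verts_cat o1E1.
  + by rewrite mem_verts_cat q2E2 orbT.
  + move=> i; rewrite size_cat /hd /tl nth_cat; case: ifP => lti ltiE.
    * have [-> tli] := arcs1 i lti; split => //; apply/eqP => tlq2.
      have := meet q2 _ q2E2; rewrite -{1}tlq2 => /(_ (tl_verts lti)) q2q1.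
      by move: tli; rewrite /tl tlq2 q2q1 eqxx.
    * have ltj : i - size E1 < size E2 by move: lti ltiE => /negbT; rewrite -leqNgt; lia.
      have [hdi ->] := arcs2 _ ltj; split => //; apply/eqP => hdo1.
      have := meet o1 o1E1; rewrite -{1}hdo1 => /(_ (hd_verts ltj)) o1q1.
      by move: hdi; rewrite /hd hdo1 o1q1 eqxx.
- move=> E1 E2 o q _ [oq oE1 qE1 arcs1] _ [_ _ _ arcs2] _.
  split => //; rewrite ?mem_verts_cat ?oE1 ?qE1 //.
  move=> i; rewrite size_cat /hd /tl nth_cat; case: ifP => lti ltiE; first exact: arcs1.
  by apply: arcs2; move: lti ltiE => /negbT; rewrite -leqNgt; lia.
Qed.

Lemma inflow_origin E o q f : SP E o q -> inflow E f o = 0.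
Proof.
move=> spE; rewrite /inflow big_mkord big1 // => i /eqP hdi.
have [_ _ _ arcs] := SP_struct spE.
by have [] := arcs i (ltn_ord i); rewrite hdi eqxx.
Qed.

Lemma outflow_target E o q f : SP E o q -> outflow E f q = 0.
Proof.
move=> spE; rewrite /outflow big_mkord big1 // => i /eqP tli.
have [_ _ _ arcs] := SP_struct spE.
by have [] := arcs i (ltn_ord i); rewrite tli eqxx.
Qed.

Definition conserves E f o q := forall v, v != o -> v != q -> outflow E f v = inflow E f v.

Definition st_flow E f o q x := conserves E f o q /\ outflow E f o = x.

Definition inner_private E1 E2 o q o' q' :=
  forall v, v \in verts E1 -> v != o -> v != q -> [/\ v \notin verts E2, v != o' & v != q'].

Lemma conserves_left E1 E2 f o q o' q' :
  conserves (E1 ++ E2) f o' q' -> inner_private E1 E2 o q o' q' -> conserves E1 f o q.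
Proof.
move=> cons priv v vo vq; have [vE1|vE1] := boolP (v \in verts E1).
- have [vE2 vo' vq'] := priv v vE1 vo vq; have := cons v vo' vq'.
  by rewrite outflow_cat inflow_cat (outflow_notin _ vE2) (inflow_notin _ vE2) !addn0.
- by rewrite outflow_notin // inflow_notin.
Qed.

Lemma conserves_right E1 E2 f o q o' q' :
  conserves (E1 ++ E2) f o' q' -> inner_private E2 E1 o q o' q' ->
  conserves E2 (shift (size E1) f) o q.
Proof.
move=> cons priv v vo vq; have [vE2|vE2] := boolP (v \in verts E2).
- have [vE1 vo' vq'] := priv v vE2 vo vq; have := cons v vo' vq'.
  by rewrite outflow_cat inflow_cat (outflow_notin _ vE1) (inflow_notin _ vE1).
- by rewrite outflow_notin // inflow_notin.
Qed.

Lemma series_private E1 E2 o1 q1 q2 : SP E1 o1 q1 -> SP E2 q1 q2 ->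
  (forall v, v \in verts E1 -> v \in verts E2 -> v = q1) ->
  [/\ inner_private E1 E2 o1 q1 o1 q2, inner_private E2 E1 q1 q2 o1 q2,
      o1 \notin verts E2 & q2 \notin verts E1].
Proof.
move=> sp1 sp2 meet; have [oq1 o1E1 _ _] := SP_struct sp1; have [oq2 _ q2E2 _] := SP_struct sp2.
have out2 v : v \in verts E1 -> v != q1 -> v \notin verts E2.
  by move=> vE1 vq1; apply: contra vq1 => vE2; rewrite (meet v vE1 vE2).
have out1 v : v \in verts E2 -> v != q1 -> v \notin verts E1.
  by move=> vE2 vq1; apply: contra vq1 => vE1; rewrite (meet v vE1 vE2).
split.
- move=> v vE1 vo1 vq1; have vE2 := out2 v vE1 vq1; split => //.
  by apply: contra vE2 => /eqP->.
- move=> v vE2 vq1 vq2; have vE1 := out1 v vE2 vq1; split => //.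
  by apply: contra vE1 => /eqP->.
- exact: out2.
- by apply: out1; rewrite // eq_sym.
Qed.

Lemma parallel_private E1 E2 o q :
  (forall v, v \in verts E1 -> v \in verts E2 -> v = o \/ v = q) ->
  inner_private E1 E2 o q o q /\ inner_private E2 E1 o q o q.
Proof.
move=> meet; split=> v vE vo vq; split => //; apply/negP => vE'.
- by case: (meet v vE vE') => ev; [move: vo|move: vq]; rewrite ev eqxx.
- by case: (meet v vE' vE) => ev; [move: vo|move: vq]; rewrite ev eqxx.
Qed.

Lemma SP_flow_value E o q f : SP E o q -> conserves E f o q -> outflow E f o = inflow E f q.
Proof.
move=> spE; elim: spE f => {E o q}.
- by move=> o q _ f _; rewrite outflow_arc inflow_arc !eqxx.
- move=> E1 E2 o1 q1 q2 sp1 IH1 sp2 IH2 meet f cons.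
  have [priv1 priv2 o1E2 q2E1] := series_private sp1 sp2 meet.
  have [oq1 _ _ _] := SP_struct sp1; have [oq2 _ _ _] := SP_struct sp2.
  have cons1 := conserves_left cons priv1; have cons2 := conserves_right cons priv2.
  rewrite outflow_cat inflow_cat (outflow_notin _ o1E2) (inflow_notin _ q2E1) addn0 add0n.
  rewrite IH1 // -IH2 //.
  have := cons q1; rewrite eq_sym oq1 oq2 => /(_ isT isT).
  by rewrite outflow_cat inflow_cat (outflow_target _ sp1) (inflow_origin _ sp2) add0n addn0.
- move=> E1 E2 o q sp1 IH1 sp2 IH2 meet f cons.
  have [priv1 priv2] := parallel_private meet.
  have cons1 := conserves_left cons priv1; have cons2 := conserves_right cons priv2.
  by rewrite outflow_cat inflow_cat IH1 // IH2.
Qed.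

Lemma series_restrict E1 E2 o1 q1 q2 f x : SP E1 o1 q1 -> SP E2 q1 q2 ->
  (forall v, v \in verts E1 -> v \in verts E2 -> v = q1) ->
  st_flow (E1 ++ E2) f o1 q2 x ->
  st_flow E1 f o1 q1 x /\ st_flow E2 (shift (size E1) f) q1 q2 x.
Proof.
move=> sp1 sp2 meet [cons val].
have [priv1 priv2 o1E2 _] := series_private sp1 sp2 meet.
have [oq1 _ _ _] := SP_struct sp1; have [oq2 _ _ _] := SP_struct sp2.
have cons1 := conserves_left cons priv1; have cons2 := conserves_right cons priv2.
have val1 : outflow E1 f o1 = x by rewrite -val outflow_cat (outflow_notin _ o1E2) addn0.
split; split => //.
have := cons q1; rewrite eq_sym oq1 oq2 => /(_ isT isT).
rewrite outflow_cat inflow_cat (outflow_target _ sp1) (inflow_origin _ sp2) add0n addn0 => ->.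
by rewrite -(SP_flow_value sp1 cons1).
Qed.

Lemma series_glue E1 E2 o1 q1 q2 g1 g2 t : SP E1 o1 q1 -> SP E2 q1 q2 ->
  (forall v, v \in verts E1 -> v \in verts E2 -> v = q1) ->
  st_flow E1 g1 o1 q1 t -> st_flow E2 g2 q1 q2 t ->
  st_flow (E1 ++ E2) (glue (size E1) g1 g2) o1 q2 t.
Proof.
move=> sp1 sp2 meet [cons1 val1] [cons2 val2].
have [_ _ o1E2 _] := series_private sp1 sp2 meet.
split; last by rewrite outflow_glue val1 (outflow_notin _ o1E2) addn0.
move=> v vo1 vq2; rewrite outflow_glue inflow_glue.
have [->|vq1] := eqVneq v q1; last by rewrite cons1 // cons2.
rewrite (outflow_target _ sp1) (inflow_origin _ sp2) val2 -(SP_flow_value sp1 cons1) val1.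
by rewrite add0n addn0.
Qed.

Lemma parallel_restrict E1 E2 o q f x :
  (forall v, v \in verts E1 -> v \in verts E2 -> v = o \/ v = q) ->
  st_flow (E1 ++ E2) f o q x ->
  exists a b, [/\ a + b = x, st_flow E1 f o q a & st_flow E2 (shift (size E1) f) o q b].
Proof.
move=> meet [cons val]; have [priv1 priv2] := parallel_private meet.
exists (outflow E1 f o), (outflow E2 (shift (size E1) f) o).
split; [by rewrite -outflow_cat | split | split] => //.
- exact: conserves_left cons priv1.
- exact: conserves_right cons priv2.
Qed.

Lemma parallel_glue E1 E2 o q g1 g2 a b :
  st_flow E1 g1 o q a -> st_flow E2 g2 o q b ->
  st_flow (E1 ++ E2) (glue (size E1) g1 g2) o q (a + b).
Proof.
move=> [cons1 val1] [cons2 val2]; split; last by rewrite outflow_glue val1 val2.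
by move=> v vo vq; rewrite outflow_glue inflow_glue cons1 // cons2.
Qed.

Definition between E f1 f2 g := forall i, i < size E -> minn (f1 i) (f2 i) <= g i <= f2 i.

Lemma between_glue E1 E2 f1 f2 g1 g2 :
  between E1 f1 f2 g1 -> between E2 (shift (size E1) f1) (shift (size E1) f2) g2 ->
  between (E1 ++ E2) f1 f2 (glue (size E1) g1 g2).
Proof.
move=> bw1 bw2 i; rewrite size_cat /glue; case: ifP => lti ltiE; first exact: bw1.
have lej : size E1 <= i by rewrite leqNgt lti.
have ltj : i - size E1 < size E2 by lia.
by have := bw2 _ ltj; rewrite /shift subnKC.
Qed.

Lemma split_between a1 b1 a2 b2 t : minn a1 a2 + minn b1 b2 <= t <= a2 + b2 ->
  exists ta tb, [/\ ta + tb = t, minn a1 a2 <= ta <= a2 & minn b1 b2 <= tb <= b2].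
Proof.
move=> tbw; exists (minn a2 (t - minn b1 b2)), (t - minn a2 (t - minn b1 b2)).
split; lia.
Qed.

Lemma SP_interpolate E o q f1 f2 x y t : SP E o q ->
  st_flow E f1 o q x -> st_flow E f2 o q y -> minn x y <= t <= y ->
  exists2 g, st_flow E g o q t & between E f1 f2 g.
Proof.
move=> spE; elim: spE f1 f2 x y t => {E o q}.
- move=> o q oq f1 f2 x y t [_ val1] [_ val2] tbw.
  move: val1 val2; rewrite !outflow_arc eqxx => val1 val2.
  exists (fun=> t); last by case=> // _; rewrite val1 val2.
  split; last by rewrite outflow_arc eqxx.
  by move=> v vo vq; rewrite outflow_arc inflow_arc ![_ == v]eq_sym (negbTE vo) (negbTE vq).
- move=> E1 E2 o1 q1 q2 sp1 IH1 sp2 IH2 meet f1 f2 x y t fl1 fl2 tbw.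
  have [fl11 fl12] := series_restrict sp1 sp2 meet fl1.
  have [fl21 fl22] := series_restrict sp1 sp2 meet fl2.
  have [g1 gl1 bw1] := IH1 _ _ _ _ _ fl11 fl21 tbw.
  have [g2 gl2 bw2] := IH2 _ _ _ _ _ fl12 fl22 tbw.
  exists (glue (size E1) g1 g2); first exact: series_glue sp1 sp2 meet gl1 gl2.
  exact: between_glue.
- move=> E1 E2 o q sp1 IH1 sp2 IH2 meet f1 f2 x y t fl1 fl2 tbw.
  have [a1 [b1 [ex fl11 fl12]]] := parallel_restrict meet fl1.
  have [a2 [b2 [ey fl21 fl22]]] := parallel_restrict meet fl2.
  have tbw' : minn a1 a2 + minn b1 b2 <= t <= a2 + b2.
    by move: tbw; rewrite -ex -ey; lia.
  have [ta [tb [et tabw tbbw]]] := split_between tbw'.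
  have [g1 gl1 bw1] := IH1 _ _ _ _ _ fl11 fl21 tabw.
  have [g2 gl2 bw2] := IH2 _ _ _ _ _ fl12 fl22 tbbw.
  exists (glue (size E1) g1 g2); last exact: between_glue.
  by rewrite -et; apply: parallel_glue.
Qed.

Lemma bflow_st_flow E o q u d f : SP E o q -> is_bflow E u (stbal o q d) f -> st_flow E f o q d.
Proof.
move=> spE [_ bal]; split.
- move=> v vo vq; have := bal v; rewrite /stbal (negbTE vo) (negbTE vq).
  rewrite /outflow /inflow !big_mkord; lia.
- have := bal o; rewrite /stbal eqxx.
  have := inflow_origin f spE; rewrite /outflow /inflow !big_mkord; lia.
Qed.

Lemma st_flow_bflow E o q u d g : SP E o q -> st_flow E g o q d ->
  (forall i, i < size E -> g i <= u i) -> is_bflow E u (stbal o q d) g.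
Proof.
move=> spE [cons val] cap; have [oq _ _ _] := SP_struct spE; split => // v.
have in_o := inflow_origin g spE; have out_q := outflow_target g spE.
have in_q := SP_flow_value spE cons.
rewrite /stbal; have [->|vo] := eqVneq v o.
  by move: val in_o; rewrite /outflow /inflow !big_mkord; lia.
have [->|vq] := eqVneq v q.
  by move: val out_q in_q; rewrite /outflow /inflow !big_mkord; lia.
by move: (cons v vo vq); rewrite /outflow /inflow !big_mkord; lia.
Qed.

End SeriesParallel.

Lemma exists_minimizer (T : Type) (P : T -> Prop) (w : T -> nat) :
  (exists x, P x) -> exists2 x, P x & forall y, P y -> w x <= w y.
Proof.
move=> [x0 Px0]; have [n ltx0n] : exists n, w x0 < n by exists (w x0).+1.
elim: n x0 Px0 ltx0n => [x _|n IH x Px ltxn]; first by rewrite ltn0.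
have [[y [Py ltyx]]|nolt] := classic (exists y, P y /\ w y < w x).
  by apply: (IH y Py); apply: leq_trans ltyx _; rewrite -ltnS.
exists x => // y Py; rewrite leqNgt; apply/negP => ltyx; apply: nolt; by exists y.
Qed.

Lemma optimal_exists E fixed u c b1 b2 :
  (exists g1 g2, robust_flow E fixed u b1 b2 g1 g2) ->
  exists f1 f2, optimal_robust_flow E fixed u c b1 b2 f1 f2.
Proof.
move=> [g1 [g2 rob]].
have [[f1 f2] robf minf] := @exists_minimizer _
  (fun p => robust_flow E fixed u b1 b2 p.1 p.2) (fun p => robust_cost E c p.1 p.2)
  (ex_intro _ (g1, g2) rob).
by exists f1, f2; split => // h1 h2 robh; apply: (minf (h1, h2)).
Qed.

(* Capacities of g come for free from g <= f2, hence the form of the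
   b1-flow hypothesis. *)
Lemma robust_between E fixed u c b1 b2 f1 f2 g :
  robust_flow E fixed u b1 b2 f1 f2 -> between E f1 f2 g ->
  ((forall i, i < size E -> g i <= u i) -> is_bflow E u b1 g) ->
  robust_flow E fixed u b1 b2 g f2 /\ robust_cost E c g f2 = flow_cost E c f2.
Proof.
move=> [_ [flow2 agree]] bw gflow; have [cap2 _] := flow2.
have gcap i : i < size E -> g i <= u i.
  by move=> lti; have /andP[_ le2] := bw i lti; apply: leq_trans le2 (cap2 i lti).
have agree_g i : i < size E -> fixed i -> g i = f2 i.
  move=> lti fixi; have := bw i lti; rewrite (agree i lti fixi) minnn => eg.
  by apply/eqP; rewrite eqn_leq andbC.
split; first by split; [exact: gflow | split].
apply/maxn_idPr; rewrite /flow_cost; apply: leq_sum => i _; rewrite leq_mul2l.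
by have /andP[_ ->] := bw i (ltn_ord i); rewrite orbT.
Qed.

Theorem mainTheorem17 (E : seq (nat * nat)) (o q : nat) (fixed : nat -> bool)
    (u c : nat -> nat) (d1 d2 : nat) :
  SP E o q -> d1 <= d2 ->
  (exists g1 g2, robust_flow E fixed u (stbal o q d1) (stbal o q d2) g1 g2) ->
  exists f1 f2,
    optimal_robust_flow E fixed u c (stbal o q d1) (stbal o q d2) f1 f2 /\
    robust_cost E c f1 f2 = flow_cost E c f2.
Proof.
move=> spE led feasible.
have [f1 [f2 [robf optf]]] := optimal_exists c feasible.
have [flow1 [flow2 _]] := robf.
have [g gflow bw] := SP_interpolate spE (bflow_st_flow spE flow1) (bflow_st_flow spE flow2)
  (t := d1) ltac:(lia).
have [robg costg] := robust_between c robf bw (st_flow_bflow spE gflow).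
exists g, f2; split => //; split => // h1 h2 robh.
by rewrite costg; apply: leq_trans (optf h1 h2 robh); apply: leq_maxr.
Qed.
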